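(* For every integer $r\ge 0$: \begin{align*} \mathrm{LCD}[6r+3,2] &< 4r+3,\\ \mathrm{LCD}[6r+4,2] &< 4r+3,\\ \mathrm{LCD}[6r+7,2] &< 4r+5,\\ \mathrm{LCD}[6r+8,2] &< 4r+6. \end{align*}
   Context: All codes are binary linear codes, i.e. subspaces of $\mathbb{F}_2^n$; an $[n,k,d]$ code is one of length $n$, dimension $k$ and minimum Hamming distance $d$. A linear code $C$ is an LCD code if $C\cap C^\perp=\{0\}$, where $C^\perp$ is the dual with respect to the standard dot product. For positive integers $n\ge k$, $\mathrm{LCD}[n,k]$ denotes the largest $d$ such that there exists a binary $[n,k,d]$ LCD code. *)

From mathcomp Require Import all_boot all_algebra.
Set Implicit Arguments. Unset Strict Implicit. Unset Printing Implicit Defensive.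
Import GRing.Theory.
Local Open Scope ring_scope.

Definition wt (n : nat) (v : 'rV['F_2]_n) : nat := #|[set j : 'I_n | v 0 j != 0]|.

(* Minimum distance of the code C spanned by the rows of G (a k x n generator
   matrix of full rank k): the least weight of a nonzero codeword x *m G.
   (The default n is irrelevant when k >= 1 and G has rank k.) *)
Definition mindist (k n : nat) (G : 'M['F_2]_(k, n)) : nat :=
  \big[minn/n]_(x : 'rV['F_2]_k | x *m G != 0) wt (x *m G).

(* The code spanned by G is LCD: C ∩ C^⊥ = {0}, where C^⊥ = {u | u *m G^T = 0}
   = kermx G^T (the dual for the standard dot product). *)
Definition is_LCD (k n : nat) (G : 'M['F_2]_(k, n)) : bool :=
  ((G :&: kermx G^T)%MS == 0).

Definition LCD (n k : nat) : nat :=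
  \max_(G : 'M['F_2]_(k, n) | (\rank G == k) && is_LCD G) mindist G.

(** Plotkin's argument for two-dimensional codes: two independent codewords
    [u], [v] of a binary code give three nonzero codewords [u], [v], [u + v],
    and every coordinate is nonzero in at most two of them, so the minimum
    distance [d] satisfies [3 d <= 2 n].  Each of the four bounds is
    [floor (2 n / 3) + 1]. *)

From mathcomp Require Import all_boot all_algebra order zify.
Set Implicit Arguments. Unset Strict Implicit. Unset Printing Implicit Defensive.
Import GRing.Theory Order.TTheory.
Local Open Scope ring_scope.

Lemma wtE n (v : 'rV['F_2]_n) : wt v = (\sum_(j < n) (v 0%R j != 0%R))%N.
Proof. by rewrite /wt -sum1_card big_mkcond; apply: eq_bigr => j _; rewrite inE. Qed.

Lemma F2_support_sum (a b : 'F_2) :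
  ((a != 0%R) + (b != 0%R) + (a + b != 0)%R <= 2)%N.
Proof. by case: a b => -[|[|[]//]] ? [[|[|[]//]] ?]. Qed.

Lemma wt_triple_le n (u v : 'rV['F_2]_n) : (wt u + wt v + wt (u + v) <= 2 * n)%N.
Proof.
rewrite !wtE -!big_split /=.
apply: (@leq_trans (\sum_(j < n) 2)%N); last by rewrite sum_nat_const card_ord mulnC.
by apply: leq_sum => j _; rewrite mxE F2_support_sum.
Qed.

Lemma mindist_le_wt k n (G : 'M['F_2]_(k, n)) (x : 'rV_k) :
  x *m G != 0 -> (mindist G <= wt (x *m G))%N.
Proof. exact: (bigmin_le_cond n (fun x => wt (x *m G))). Qed.

Lemma mindist_rank2_le n (G : 'M['F_2]_(2, n)) :
  \rank G = 2 -> (3 * mindist G <= 2 * n)%N.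
Proof.
move=> rkG.
have codeword_nz (x : 'rV_2) : x != 0 -> x *m G != 0.
  by rewrite mulmx_free_eq0 // /row_free rkG.
pose e0 : 'rV['F_2]_2 := delta_mx 0 0; pose e1 : 'rV['F_2]_2 := delta_mx 0 1.
have e0_nz : e0 != 0 by apply/eqP => /matrixP /(_ 0 0); rewrite !mxE.
have e1_nz : e1 != 0 by apply/eqP => /matrixP /(_ 0 1); rewrite !mxE.
have e01_nz : e0 + e1 != 0 by apply/eqP => /matrixP /(_ 0 0); rewrite !mxE.
apply: leq_trans (wt_triple_le (e0 *m G) (e1 *m G)).
rewrite -mulmxDl !mulSn mul0n addn0 addnA.
by rewrite !leq_add // mindist_le_wt // codeword_nz.
Qed.

Lemma LCD2_le n : (3 * LCD n 2 <= 2 * n)%N.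
Proof.
rewrite /LCD big_distrr /=.
by apply/bigmax_leqP => G /andP[/eqP rkG _]; apply: mindist_rank2_le.
Qed.

Local Close Scope ring_scope.

Theorem proposition2p3 (r : nat) :
  [/\ LCD (6 * r + 3) 2 < 4 * r + 3,
      LCD (6 * r + 4) 2 < 4 * r + 3,
      LCD (6 * r + 7) 2 < 4 * r + 5
    & LCD (6 * r + 8) 2 < 4 * r + 6].
Proof.
have := LCD2_le (6 * r + 3); have := LCD2_le (6 * r + 4).
have := LCD2_le (6 * r + 7); have := LCD2_le (6 * r + 8).
by split; lia.
Qed.
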